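(* Let $E$ be a Banach lattice. Then the set $B_{UDP}(E)$ of all $uaw$-Dunford-Pettis operators on $E$ is a subalgebra of the algebra $B(E)$ of all bounded operators on $E$.
   Context: A net $(x_\alpha)$ in a Banach lattice $E$ is $uaw$-convergent to $x$ if $|x_\alpha-x|\wedge u\to 0$ weakly for every $u\in E_+$. A bounded operator $T\colon E\to E$ is $uaw$-Dunford-Pettis if for every norm bounded sequence $(x_n)$ in $E$ that is $uaw$-convergent to $0$ one has $\|Tx_n\|\to 0$. *)

From HB Require Import structures.
From mathcomp Require Import all_boot all_order all_algebra.
From mathcomp Require Import all_classical all_reals.
From mathcomp Require Import topology normedtype sequences.
Set Implicit Arguments. Unset Strict Implicit. Unset Printing Implicit Defensive.
Import Order.TTheory GRing.Theory Num.Theory.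
Import numFieldNormedType.Exports.
Local Open Scope classical_set_scope.
Local Open Scope ring_scope.

Section BanachLattice.
Variables (R : realType) (E : completeNormedModType R).

Variable join : E -> E -> E.

Definition bl_le (x y : E) : Prop := join x y = y.
Definition bl_meet (x y : E) : E := - join (- x) (- y).
Definition bl_abs (x : E) : E := join x (- x).

Definition is_banach_lattice : Prop :=
  [/\ (forall x, join x x = x) /\ (forall x y, join x y = join y x),
      (forall x y z, join x (join y z) = join (join x y) z),
      (forall x y z, join (x + z) (y + z) = join x y + z),
      (forall (a : R) x y, 0 <= a -> join (a *: x) (a *: y) = a *: join x y)
    & (forall x y, bl_le (bl_abs x) (bl_abs y) -> `|x| <= `|y|) ].

Definition linear_map (V W : normedModType R) (T : V -> W) : Prop :=
  forall (a : R) (x y : V), T (a *: x + y) = a *: T x + T y.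
Definition bounded_linear (V W : normedModType R) (T : V -> W) : Prop :=
  linear_map T /\ exists M : R, forall x, `|T x| <= M * `|x|.

Definition bounded_ops : set (E -> E) := [set T | bounded_linear T].

Definition weakly_null (x : nat -> E) : Prop :=
  forall f : E -> R^o, bounded_linear f -> (fun n => f (x n)) @ \oo --> (0 : R).

Definition uaw_null (x : nat -> E) : Prop :=
  forall u : E, bl_le 0 u -> weakly_null (fun n => bl_meet (bl_abs (x n)) u).

Definition norm_bounded_seq (x : nat -> E) : Prop :=
  exists M : R, forall n, `|x n| <= M.

Definition uaw_DP (T : E -> E) : Prop :=
  bounded_linear T /\
  forall x : nat -> E, norm_bounded_seq x -> uaw_null x ->
    (fun n => `|T (x n)|) @ \oo --> (0 : R).

Definition B_UDP : set (E -> E) := [set T | uaw_DP T].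

Definition is_subalgebra_of_BE (S : set (E -> E)) : Prop :=
  [/\ S `<=` bounded_ops,
      S (fun _ => 0),
      (forall T U, S T -> S U -> S (fun x => T x + U x)),
      (forall (a : R) T, S T -> S (fun x => a *: T x))
    & (forall T U, S T -> S U -> S (T \o U)) ].

End BanachLattice.

From mathcomp Require Import all_boot all_order all_algebra.
From mathcomp Require Import all_classical all_reals.
From mathcomp Require Import topology normedtype sequences.
Set Implicit Arguments. Unset Strict Implicit. Unset Printing Implicit Defensive.
Import Order.TTheory GRing.Theory Num.Theory.
Import numFieldNormedType.Exports.
Local Open Scope classical_set_scope.
Local Open Scope ring_scope.

(* In particular [B_UDP] is even a left ideal of [B(E)]. *)

Lemma squeeze_cvg0 (R : realFieldType) (u v : nat -> R) :
  (forall n, 0 <= u n <= v n) -> v @ \oo --> 0 -> u @ \oo --> 0.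
Proof.
move=> uv v0; apply: (squeeze_cvgr _ (cvg_cst 0) v0).
exact: nearW.
Qed.

Lemma bounded_linear_ge0 (R : realType) (V W : normedModType R) (T : V -> W) :
  bounded_linear T ->
  exists2 M : R, 0 <= M & forall x, `|T x| <= M * `|x|.
Proof.
move=> [_ [M TM]]; exists (Num.max M 0); first by rewrite le_max lexx orbT.
move=> x; apply: le_trans (TM x) _.
by apply: ler_wpM2r => //; rewrite le_max lexx.
Qed.

Section BoundedLinear.
Variables (R : realType) (V W X : normedModType R).

Lemma bounded_linear0 : bounded_linear (fun _ : V => 0 : W).
Proof.
split; first by move=> a x y; rewrite scaler0 addr0.
by exists 0 => x; rewrite normr0 mul0r.
Qed.

Lemma bounded_linearD (T U : V -> W) : bounded_linear T -> bounded_linear U ->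
  bounded_linear (fun x => T x + U x).
Proof.
move=> [linT [MT TM]] [linU [MU UM]]; split.
  by move=> a x y; rewrite linT linU scalerDr addrACA.
exists (MT + MU) => x; rewrite mulrDl.
by apply: le_trans (ler_normD _ _) _; apply: lerD.
Qed.

Lemma bounded_linearZ (a : R) (T : V -> W) : bounded_linear T ->
  bounded_linear (fun x => a *: T x).
Proof.
move=> [linT [M TM]]; split.
  by move=> b x y; rewrite linT scalerDr !scalerA mulrC.
exists (`|a| * M) => x; rewrite normrZ -mulrA.
exact: ler_wpM2l.
Qed.

Lemma bounded_linear_comp (T : W -> X) (U : V -> W) :
  bounded_linear T -> bounded_linear U -> bounded_linear (T \o U).
Proof.
move=> bT [linU [MU UM]]; have [M M0 TM] := bounded_linear_ge0 bT.
have [linT _] := bT.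
split; first by move=> a x y /=; rewrite linU linT.
exists (M * MU) => x /=; rewrite -mulrA.
by apply: le_trans (TM _) _; apply: ler_wpM2l.
Qed.

End BoundedLinear.

Section UawDunfordPettis.
Variables (R : realType) (E : completeNormedModType R) (join : E -> E -> E).

Lemma uaw_DP_dominated (S U : E -> E) (C : R) :
  bounded_linear S -> uaw_DP join U -> (forall x, `|S x| <= C * `|U x|) ->
  uaw_DP join S.
Proof.
move=> bS [_ U0] SU; split=> // x xb xuaw.
apply: (@squeeze_cvg0 _ _ (fun n => C * `|U (x n)|)).
  by move=> n; rewrite normr_ge0 SU.
by rewrite -(mulr0 C); apply: cvgMl_tmp; exact: U0.
Qed.

Lemma uaw_DP0 : uaw_DP join (fun _ => 0).
Proof.
split; first exact: bounded_linear0.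
by move=> x _ _; rewrite normr0; exact: cvg_cst.
Qed.

Lemma uaw_DPD (T U : E -> E) : uaw_DP join T -> uaw_DP join U ->
  uaw_DP join (fun x => T x + U x).
Proof.
move=> [bT T0] [bU U0]; split; first exact: bounded_linearD.
move=> x xb xuaw.
apply: (@squeeze_cvg0 _ _ (fun n => `|T (x n)| + `|U (x n)|)).
  by move=> n; rewrite normr_ge0 ler_normD.
by rewrite -(addr0 0); apply: cvgD; [exact: T0 | exact: U0].
Qed.

Lemma uaw_DPZ (a : R) (T : E -> E) : uaw_DP join T ->
  uaw_DP join (fun x => a *: T x).
Proof.
move=> DPT; apply: (uaw_DP_dominated (C := `|a|) _ DPT).
  exact: bounded_linearZ DPT.1.
by move=> x; rewrite normrZ.
Qed.

Lemma uaw_DP_compl (T U : E -> E) : bounded_linear T -> uaw_DP join U ->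
  uaw_DP join (T \o U).
Proof.
move=> bT DPU; have [M _ TM] := bounded_linear_ge0 bT.
apply: (uaw_DP_dominated (C := M) _ DPU) => [|x]; last exact: TM.
exact: bounded_linear_comp DPU.1.
Qed.

End UawDunfordPettis.

Theorem corollary2p8 (R : realType) (E : completeNormedModType R)
  (join : E -> E -> E) (HE : is_banach_lattice join) :
  is_subalgebra_of_BE (B_UDP join).
Proof.
split.
- by move=> T [].
- exact: uaw_DP0.
- exact: uaw_DPD.
- exact: uaw_DPZ.
- by move=> T U [bT _] DPU; exact: uaw_DP_compl.
Qed.
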